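(* Let $G$ be a graph with vertices $a,b,c,d$, and let $H$ be any graph. There is perfect pair state transfer between $e_a-e_b$ and $e_c-e_d$ in $G$ if and only if there is perfect pair state transfer between $e_a-e_b$ and $e_c-e_d$ in the join of $G$ and $H$.
   Context: All graphs are finite and simple. The join of graphs $G_1,G_2$ has vertex set $V(G_1)\cup V(G_2)$ (disjoint) and edge set $E(G_1)\cup E(G_2)$ together with all edges having one end in $V(G_1)$ and the other in $V(G_2)$. For a graph $X$ with Laplacian $L=\Delta-A$ ($\Delta$ the degree matrix, $A$ the adjacency matrix), set $U(t)=\exp(itL)$. There is perfect pair state transfer between $e_a-e_b$ and $e_c-e_d$ in $X$ if there exist $t\ge 0$ and $\gamma\in\mathbb{C}$ with $|\gamma|=1$ such that $U(t)(e_a-e_b)=\gamma(e_c-e_d)$, where $e_v$ denotes the standard basis vector of vertex $v$. *)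

From HB Require Import structures.
From mathcomp Require Import all_boot all_order all_algebra.
From mathcomp Require Import complex.
From mathcomp Require Import all_classical all_reals all_analysis.
Import numFieldNormedType.Exports.

Set Implicit Arguments.
Unset Strict Implicit.
Unset Printing Implicit Defensive.

Import Order.TTheory GRing.Theory Num.Theory.
Local Open Scope ring_scope.
Local Open Scope complex_scope.

Definition simple_graph (n : nat) (adj : rel 'I_n) : Prop :=
  symmetric adj /\ irreflexive adj.

(* Join of G (on 'I_n) and H (on 'I_m): vertex set 'I_(n + m), where
   lshift m v is the copy of vertex v of G and rshift n w that of H. *)
Definition graph_join (n m : nat) (G : rel 'I_n) (H : rel 'I_m) : rel 'I_(n + m) :=
  fun u v =>
    match fintype.split u, fintype.split v with
    | inl x, inl y => G x y
    | inr x, inr y => H x y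
    | _, _ => true
    end.

Section Laplacian.
Variable R : realType.

Definition adj_mx (n : nat) (G : rel 'I_n) : 'M[R[i]]_n :=
  \matrix_(x, y) (G x y)%:R.

Definition deg_mx (n : nat) (G : rel 'I_n) : 'M[R[i]]_n :=
  \matrix_(x, y) ((x == y)%:R * #|[pred z | G x z]|%:R).

Definition laplacian (n : nat) (G : rel 'I_n) : 'M[R[i]]_n :=
  deg_mx G - adj_mx G.

Definition expm (n : nat) (A : 'M[R[i]]_n) : 'M[R[i]]_n :=
  limn (fun N : nat => \sum_(k < N) (k`!%:R)^-1 *: A ^+ k).

Definition transition (n : nat) (G : rel 'I_n) (t : R) : 'M[R[i]]_n :=
  expm ((t%:C * 'i) *: laplacian G).

Definition evec (n : nat) (v : 'I_n) : 'cV[R[i]]_n := delta_mx v 0.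

Definition pair_pst (n : nat) (G : rel 'I_n) (a b c d : 'I_n) : Prop :=
  exists t : R, 0 <= t /\
    exists gamma : R[i], `|gamma| = 1 /\
      transition G t *m (evec a - evec b) = gamma *: (evec c - evec d).

End Laplacian.

From HB Require Import structures.
From mathcomp Require Import all_boot all_order all_algebra.
From mathcomp Require Import complex.
From mathcomp Require Import all_classical all_reals all_analysis.
From mathcomp Require Import ring.
Import numFieldNormedType.Exports.

Set Implicit Arguments.
Unset Strict Implicit.
Unset Printing Implicit Defensive.

Import Order.TTheory GRing.Theory Num.Theory.
Local Open Scope classical_set_scope.
Local Open Scope ring_scope.
Local Open Scope complex_scope.

(* Every vertex of H is adjacent to every vertex of G, so the Laplacian of
   the join sends (v, 0) to ((L_G + m I) v, -(sum of v) 1).  On vectors whose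
   coordinates sum to zero, such as e_a - e_b, the join Laplacian therefore
   acts as L_G + m I, and exp(it L_join) (v, 0) = e^{itm} (exp(it L_G) v, 0).
   The phase e^{itm} has modulus one, so it is absorbed into gamma.  The
   exponentials are the defining power series: they converge by comparison
   with the real exponential series, exp(c I + A) = e^c exp(A) follows from a
   Cauchy product dominated by that of expR, and |e^{ir}| = 1 is Euler's
   formula for the library's cos and sin series. *)

Lemma invfact_binomial (K : numFieldType) k l : (l <= k)%N ->
  (k`!%:R)^-1 * 'C(k, l)%:R = (l`!%:R)^-1 * ((k - l)`!%:R)^-1 :> K.
Proof.
move=> lk; have fact_neq0 j : (j`!%:R : K) != 0 by rewrite pnatr_eq0 -lt0n fact_gt0.
rewrite -(bin_fact lk) !natrM.
by field; rewrite !fact_neq0 pnatr_eq0 -lt0n bin_gt0.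
Qed.

Lemma scalar_mxX (K : pzRingType) p (a : K) k : (a%:M : 'M[K]_p) ^+ k = (a ^+ k)%:M.
Proof. by elim: k => [|k IHk]; rewrite ?expr0 // !exprS IHk -mulmxE -scalar_mxM. Qed.

Section CauchyProduct.
Variable V : zmodType.
Implicit Type F : nat -> nat -> V.

Definition square_sum F N := \sum_(l < N) \sum_(j < N) F l j.

Definition cauchy_sum F N := \sum_(k < N) \sum_(l < k.+1) F l (k - l)%N.

Lemma cauchy_sumE F N : cauchy_sum F N = \sum_(l < N) \sum_(j < N - l) F l j.
Proof.
elim: N => [|N IHN]; first by rewrite /cauchy_sum !big_ord0.
rewrite /cauchy_sum big_ord_recr /= -/(cauchy_sum F N) IHN.
rewrite [RHS]big_ord_recr /= subSnn big_ord1.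
rewrite [in RHS](eq_bigr (fun l : 'I_N => \sum_(j < N - l) F l j + F l (N - l)%N)).
  by rewrite big_split /= -addrA; congr (_ + _); rewrite big_ord_recr /= subnn.
by move=> l _; rewrite subSn ?big_ord_recr //= ltnW.
Qed.

Lemma square_sum_sub_cauchy_sum F N :
  square_sum F N - cauchy_sum F N = \sum_(l < N) \sum_(j < N | (N - l <= j)%N) F l j.
Proof.
rewrite /square_sum cauchy_sumE -sumrB; apply: eq_bigr => l _.
rewrite (bigID (fun j : 'I_N => (j < N - l)%N)) /=.
rewrite (big_ord_widen N (F l)) ?leq_subr // addrAC subrr add0r.
by apply: eq_bigl => j; rewrite [RHS]leqNgt.
Qed.

End CauchyProduct.

Section ComplexSequences.
Variable R : realType.
Local Notation C := (R[i] : numFieldType).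
Local Notation normc := (@Normc.normc R).

Lemma normcE (z : C) : `|z| = (normc z)%:C.
Proof. by case: z. Qed.

Lemma normc_ge0 (z : C) : 0 <= normc z.
Proof. by case: z => a b; exact: sqrtr_ge0. Qed.

Lemma normc_real (r : R) : normc r%:C = `|r|.
Proof. by rewrite /Normc.normc /= expr0n addr0 sqrtr_sqr. Qed.

Lemma normc_invfact k : normc (k`!%:R)^-1 = (k`!%:R)^-1.
Proof.
rewrite -(rmorph_nat (@real_complex R)) -rmorphV ?unitfE ?pnatr_eq0 -?lt0n ?fact_gt0 //.
by rewrite normc_real ger0_norm // invr_ge0.
Qed.

Lemma normcX (z : C) k : normc (z ^+ k) = normc z ^+ k.
Proof. by elim: k => [|k IHk]; rewrite ?Normc.normc1 // !exprS Normc.normcM IHk. Qed.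

Lemma normc_sum_le (I : Type) (s : seq I) (P : pred I) (F : I -> C) :
  normc (\sum_(i <- s | P i) F i) <= \sum_(i <- s | P i) normc (F i).
Proof.
elim/big_rec2: _ => [|i y1 y2 _ IH]; first by rewrite Normc.normc0.
exact: le_trans (le_normcD _ _) (lerD _ IH).
Qed.

Lemma normc_Re_le (z : C) : `|complex.Re z| <= normc z.
Proof.
case: z => a b; rewrite /Normc.normc /= -sqrtr_sqr.
by apply: ler_wsqrtr; rewrite lerDl sqr_ge0.
Qed.

Lemma normc_Im_le (z : C) : `|complex.Im z| <= normc z.
Proof.
case: z => a b; rewrite /Normc.normc /= -sqrtr_sqr.
by apply: ler_wsqrtr; rewrite lerDr sqr_ge0.
Qed.

Lemma normc_le_ReIm (z : C) : normc z <= `|complex.Re z| + `|complex.Im z|.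
Proof.
case: z => a b; rewrite /Normc.normc /= -[leRHS]ger0_norm ?addr_ge0 // -sqrtr_sqr.
apply: ler_wsqrtr.
by rewrite sqrrD !real_normK ?num_real // -addrA lerD2l lerDr mulrn_wge0 ?mulr_ge0.
Qed.

Lemma Re_realM (a : R) (z : C) : complex.Re (a%:C * z) = a * complex.Re z.
Proof. by case: z => x y /=; rewrite mul0r subr0. Qed.

Lemma Im_realM (a : R) (z : C) : complex.Im (a%:C * z) = a * complex.Im z.
Proof. by case: z => x y /=; rewrite mul0r addr0. Qed.

Lemma normc_square_sub_cauchy_le (F : nat -> nat -> C) (G : nat -> nat -> R) N :
  (forall l j, normc (F l j) <= G l j) ->
  normc (square_sum F N - cauchy_sum F N) <= square_sum G N - cauchy_sum G N.
Proof.
move=> le_FG; rewrite !square_sum_sub_cauchy_sum.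
apply: le_trans (normc_sum_le _ _ _) (ler_sum _ _) => l _.
by apply: le_trans (normc_sum_le _ _ _) (ler_sum _ _) => j _.
Qed.

Section ComplexLimits.
Context {T : Type} (F : set_system T) {FF : Filter F}.

Lemma cvgC_normc_lt (f : T -> C) (l : C) :
  (forall e : R, 0 < e -> \forall x \near F, normc (l - f x) < e) -> f @ F --> l.
Proof.
move=> near_l; apply/cvgrPdist_lt => e; rewrite ltcE /= => /andP[/eqP Ime Ree].
have -> : e = (complex.Re e)%:C by case: e Ime {Ree} => a b /= ->.
by apply: filterS (near_l _ Ree) => x; rewrite normcE ltcR.
Qed.

Lemma cvgC_ReIm (f : T -> C) (a b : R) :
  complex.Re (f x) @[x --> F] --> a -> complex.Im (f x) @[x --> F] --> b ->
  f @ F --> (a +i* b : C).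
Proof.
move=> /cvgrPdist_lt Ha /cvgrPdist_lt Hb; apply: cvgC_normc_lt => e e0.
have e2 : 0 < e / 2 by rewrite divr_gt0.
near=> x; apply: le_lt_trans (normc_le_ReIm _) _.
rewrite (splitr e) ltrD //= raddfB /=; near: x; [exact: Ha | exact: Hb].
Unshelve. all: by end_near.
Qed.

Lemma cvgC_normc_le0 (f : T -> C) (r : T -> R) :
  (forall x, normc (f x) <= r x) -> r @ F --> 0 -> f @ F --> 0.
Proof.
move=> le_fr /cvgrPdist_lt r0; apply: cvgC_normc_lt => e e0.
apply: filterS (r0 _ e0) => x; rewrite !sub0r normcN normrN.
exact/le_lt_trans/(le_trans (le_fr x) (ler_norm _)).
Qed.

End ComplexLimits.

Lemma Re_series (u : nat -> C) :
  (fun N => complex.Re (series u N)) = series (@complex.Re R \o u).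
Proof. by apply: funext => N; rewrite /series /= raddf_sum. Qed.

Lemma Im_series (u : nat -> C) :
  (fun N => complex.Im (series u N)) = series (@complex.Im R \o u).
Proof. by apply: funext => N; rewrite /series /= raddf_sum. Qed.

Lemma cvg_series_normc_le (u : nat -> C) (v : nat -> R) :
  (forall k, normc (u k) <= v k) -> cvg (series v @ \oo) -> cvg (series u @ \oo).
Proof.
move=> le_uv cvg_v.
have cvg_part (g : C -> R) :
    (forall z, `|g z| <= normc z) -> cvg (series (g \o u) @ \oo).
  move=> le_g; apply: (@normed_cvg _ R^o); apply: series_le_cvg cvg_v => k.
  - exact: normr_ge0.
  - exact: le_trans (normc_ge0 _) (le_uv k).
  - exact: le_trans (le_g _) (le_uv k).
apply/cvg_ex.
exists (limn (series (@complex.Re R \o u)) +i* limn (series (@complex.Im R \o u))).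
apply: cvgC_ReIm; rewrite ?Re_series ?Im_series; apply: cvg_part.
  exact: normc_Re_le.
exact: normc_Im_le.
Qed.

End ComplexSequences.

Section MatrixConvergence.
Variable K : numFieldType.
Context {T : Type} (F : set_system T) {FF : Filter F}.

Lemma cvg_mxP p q (X : T -> 'M[K]_(p, q)) (l : 'M[K]_(p, q)) :
  X @ F --> l <-> forall i j, X x i j @[x --> F] --> l i j.
Proof.
split=> [cvgX i j | cvgXij].
  exact: continuous_cvg (@coord_continuous K p q i j l) cvgX.
move=> A [P nbhsP sPA].
have : \forall x \near F, forall ij : 'I_p * 'I_q, P ij.1 ij.2 (X x ij.1 ij.2).
  by apply: filter_forall => -[i j]; exact: cvgXij.
by apply: filterS => x Px; apply: sPA => i j; exact: (Px (i, j)).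
Qed.

Lemma cvg_mulmx p q r s (P : 'M[K]_(p, q)) (X : T -> 'M[K]_(q, r)) (Q : 'M[K]_(r, s))
    (l : 'M[K]_(q, r)) :
  X @ F --> l -> P *m X x *m Q @[x --> F] --> P *m l *m Q.
Proof.
move=> /cvg_mxP cvgX; apply/cvg_mxP => i j.
rewrite mxE (_ : (fun x => _) = fun x => \sum_k (P *m X x) i k * Q k j); last first.
  by apply: funext => x; rewrite mxE.
apply: cvg_big; [exact: add_continuous | move=> k _; apply: cvgMr_tmp].
rewrite mxE (_ : (fun x => _) = fun x => \sum_k' P i k' * X x k' k); last first.
  by apply: funext => x; rewrite mxE.
by apply: cvg_big; [exact: add_continuous | move=> k' _; apply: cvgMl_tmp; exact: cvgX].
Qed.

End MatrixConvergence.

Section Exponentials.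
Variable R : realType.
Local Notation C := (R[i] : numFieldType).
Local Notation normc := (@Normc.normc R).

Definition expm_trunc p (A : 'M[C]_p) (N : nat) : 'M[C]_p :=
  \sum_(k < N) (k`!%:R)^-1 *: A ^+ k.

Definition mx_sum_normc p (A : 'M[C]_p) : R := \sum_i \sum_j normc (A i j).

Lemma mx_sum_normc_ge0 p (A : 'M[C]_p) : 0 <= mx_sum_normc A.
Proof. by do 2!apply: sumr_ge0 => ? _; exact: normc_ge0. Qed.

Lemma normc_mx_exp_le p (A : 'M[C]_p) k i j :
  normc ((A ^+ k) i j) <= mx_sum_normc A ^+ k.
Proof.
have row_le i' : \sum_j normc (A i' j) <= mx_sum_normc A.
  rewrite /mx_sum_normc [leRHS](bigD1 i') //= lerDl.
  by apply: sumr_ge0 => ? _; apply: sumr_ge0 => ? _; exact: normc_ge0.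
elim: k i j => [|k IHk] i j.
  by rewrite expr0 mxE; case: (i == j); rewrite ?Normc.normc1 ?Normc.normc0.
rewrite exprS -mulmxE mxE; apply: le_trans (normc_sum_le _ _ _) _.
apply: le_trans (_ : \sum_l normc (A i l) * mx_sum_normc A ^+ k <= _).
  by apply: ler_sum => l _; rewrite Normc.normcM ler_wpM2l ?normc_ge0.
by rewrite -mulr_suml exprS ler_wpM2r ?exprn_ge0 ?mx_sum_normc_ge0.
Qed.

Lemma cvg_expm_trunc p (A : 'M[C]_p) : expm_trunc A @ \oo --> (expm A : 'M[C]_p).
Proof.
suff : cvg (expm_trunc A @ \oo) by [].
apply/cvg_ex; exists (\matrix_(i, j) limn (fun N => expm_trunc A N i j)).
apply/cvg_mxP => i j; rewrite mxE.
have -> : (fun N => expm_trunc A N i j) = series (fun k => (k`!%:R)^-1 * (A ^+ k) i j).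
  apply: funext => N; rewrite /series /= summxE big_mkord.
  by apply: eq_bigr => k _; rewrite mxE.
apply: (cvg_series_normc_le _ (is_cvg_series_exp_coeff (mx_sum_normc A))) => k.
by rewrite Normc.normcM normc_invfact exp_coeffE ler_wpM2l ?invr_ge0 ?normc_mx_exp_le.
Qed.

Lemma expm_mulmx_intertwined p q (A : 'M[C]_p) (B : 'M[C]_q)
    (E : 'M[C]_(p, q)) (S : 'cV[C]_q -> Prop) :
  (forall v, S v -> S (B *m v)) ->
  (forall v, S v -> A *m (E *m v) = E *m (B *m v)) ->
  forall v, S v -> expm A *m (E *m v) = E *m (expm B *m v).
Proof.
move=> SB AEB v Sv.
have powE k : A ^+ k *m (E *m v) = E *m (B ^+ k *m v) /\ S (B ^+ k *m v).
  elim: k => [|k [IHk SBk]]; first by rewrite !expr0 !mul1mx.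
  by rewrite !exprS -!mulmxE -!mulmxA IHk AEB // mulmxA; split; last exact: SB.
have truncE N : expm_trunc A N *m (E *m v) = E *m (expm_trunc B N *m v).
  rewrite !mulmx_suml mulmx_sumr; apply: eq_bigr => k _.
  by rewrite -!scalemxAl (powE k).1 scalemxAr.
have cvgA : 1%:M *m expm_trunc A N *m (E *m v) @[N --> \oo] -->
    (1%:M *m expm A *m (E *m v) : 'cV[C]_p).
  exact: cvg_mulmx (@cvg_expm_trunc _ A).
have cvgB : 1%:M *m expm_trunc A N *m (E *m v) @[N --> \oo] -->
    (E *m expm B *m v : 'cV[C]_p).
  under eq_fun do rewrite mul1mx truncE mulmxA.
  exact: cvg_mulmx (@cvg_expm_trunc _ B).
rewrite [RHS]mulmxA -[expm A]mul1mx.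
by rewrite -(cvg_lim (@norm_hausdorff _ _) cvgA) -(cvg_lim (@norm_hausdorff _ _) cvgB).
Qed.

Definition expc_trunc (c : C) (N : nat) : C := \sum_(k < N) (k`!%:R)^-1 * c ^+ k.

Definition expc (c : C) : C := limn (expc_trunc c).

Lemma expc_truncE c : expc_trunc c = series (fun k => (k`!%:R)^-1 * c ^+ k).
Proof. by apply: funext => N; rewrite /series /= big_mkord. Qed.

Lemma cvg_expc_trunc c : expc_trunc c @ \oo --> expc c.
Proof.
suff : cvg (expc_trunc c @ \oo) by [].
rewrite expc_truncE.
apply: (cvg_series_normc_le _ (is_cvg_series_exp_coeff (normc c))) => k.
by rewrite Normc.normcM normc_invfact normcX exp_coeffE.
Qed.

Lemma expr_i k : 'i ^+ k = 'i ^+ odd k * ((-1) ^+ k./2)%:C :> R[i].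
Proof.
by rewrite -{1}(odd_double_half k) exprD -mul2n exprM sqr_i rmorphXn rmorphN1.
Qed.

Lemma Re_expr_i k : complex.Re ('i ^+ k : R[i]) = (~~ odd k)%:R * (-1) ^+ k./2.
Proof. by rewrite expr_i; case: (odd k); rewrite /= ?(mul0r, mulr0, mul1r, subr0). Qed.

Lemma Im_expr_i k : complex.Im ('i ^+ k : R[i]) = (odd k)%:R * (-1) ^+ k.-1./2.
Proof.
rewrite expr_i; case: k => [|k] /=; first by rewrite !(mul0r, mulr0, add0r).
by rewrite uphalf_half; case: (odd k); rewrite /= ?(mul0r, mulr0, mul1r, addr0, add0r).
Qed.

Lemma expc_Euler (r : R) : expc (r%:C * 'i) = cos r +i* sin r.
Proof.
apply: (cvg_lim (@norm_hausdorff _ _)).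
have termE k :
    (k`!%:R)^-1 * (r%:C * 'i) ^+ k = ((k`!%:R)^-1 * r ^+ k)%:C * 'i ^+ k :> R[i].
  rewrite exprMn rmorphM rmorphV ?unitfE ?pnatr_eq0 -?lt0n ?fact_gt0 //.
  by rewrite rmorph_nat rmorphXn mulrA.
apply: cvgC_ReIm.
  have -> : (fun N => complex.Re (expc_trunc (r%:C * 'i) N)) = series (cos_coeff r).
    rewrite expc_truncE Re_series; congr series; apply: funext => k /=.
    by rewrite termE Re_realM Re_expr_i /cos_coeff /= -exprnP; ring.
  by rewrite unlock; exact: is_cvg_series_cos_coeff.
have -> : (fun N => complex.Im (expc_trunc (r%:C * 'i) N)) = series (sin_coeff r).
  rewrite expc_truncE Im_series; congr series; apply: funext => k /=.
  by rewrite termE Im_realM Im_expr_i /sin_coeff /=; ring.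
by rewrite unlock; exact: is_cvg_series_sin_coeff.
Qed.

Lemma normr_expc_Euler (r : R) : `|expc (r%:C * 'i)| = 1.
Proof. by rewrite expc_Euler normc_def /= cos2Dsin2 sqrtr1. Qed.

Lemma cauchy_sum_exp_coeff (x y : R) :
  cauchy_sum (fun l j => exp_coeff x l * exp_coeff y j) = series (exp_coeff (x + y)).
Proof.
apply: funext => N; rewrite /cauchy_sum /series /= big_mkord; apply: eq_bigr => k _.
rewrite !exp_coeffE /= addrC exprDn mulr_sumr; apply: eq_bigr => l _.
rewrite -[_ *+ 'C(k, l)]mulr_natr.
rewrite [RHS](_ : _ = k`!%:R^-1 * 'C(k, l)%:R * (x ^+ l * y ^+ (k - l))); last by ring.
by rewrite (@invfact_binomial R k l (ltn_ord l)); ring.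
Qed.

Lemma cvg_square_sub_cauchy_exp_coeff (x y : R) :
  (fun N => square_sum (fun l j => exp_coeff x l * exp_coeff y j) N -
            cauchy_sum (fun l j => exp_coeff x l * exp_coeff y j) N) @ \oo --> 0.
Proof.
have squareE N : square_sum (fun l j => exp_coeff x l * exp_coeff y j) N =
    series (exp_coeff x) N * series (exp_coeff y) N.
  rewrite /square_sum /series /= !big_mkord mulr_suml.
  by apply: eq_bigr => l _; rewrite mulr_sumr.
under eq_fun do rewrite squareE cauchy_sum_exp_coeff.
have := cvgB (cvgM (is_cvg_series_exp_coeff x) (is_cvg_series_exp_coeff y))
             (is_cvg_series_exp_coeff (x + y)).
by rewrite -expRD subrr; apply.
Qed.

Section ScalarShift.
Variables (p : nat) (c : C) (A : 'M[C]_p).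

Let term i j l m := (l`!%:R)^-1 * c ^+ l * ((m`!%:R)^-1 * (A ^+ m) i j).

Let expm_trunc_scalar_addE N i j :
  expm_trunc (c%:M + A) N i j = cauchy_sum (term i j) N.
Proof.
rewrite summxE; apply: eq_bigr => k _.
rewrite mxE addrC exprDn_comm; last by rewrite /GRing.comm -!mulmxE scalar_mxC.
rewrite summxE mulr_sumr; apply: eq_bigr => l _.
rewrite scalar_mxX -mulmxE mul_mx_scalar -[_ *+ 'C(k, l)]scaler_nat !mxE /term.
by rewrite [LHS]mulrA (@invfact_binomial C k l (ltn_ord l)); ring.
Qed.

Let expc_trunc_mul_expm_truncE N i j :
  expc_trunc c N * expm_trunc A N i j = square_sum (term i j) N.
Proof.
rewrite /expc_trunc summxE mulr_suml; apply: eq_bigr => l _.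
by rewrite mulr_sumr; apply: eq_bigr => m _; rewrite mxE.
Qed.

Lemma expm_scalar_add : expm (c%:M + A) = expc c *: expm A.
Proof.
apply: (cvg_lim (@norm_hausdorff _ _)); rewrite -/(expm_trunc _).
apply/cvg_mxP => i j; rewrite mxE.
have cvg_prod :
    expc_trunc c N * expm_trunc A N i j @[N --> \oo] --> expc c * expm A i j.
  have /cvg_mxP cvgA := @cvg_expm_trunc _ A.
  exact: cvgM (@cvg_expc_trunc c) (cvgA i j).
have cvg_rem : square_sum (term i j) N - cauchy_sum (term i j) N @[N --> \oo] --> 0.
  apply: cvgC_normc_le0
    (cvg_square_sub_cauchy_exp_coeff (normc c) (mx_sum_normc A)) => N.
  apply: normc_square_sub_cauchy_le => l m.
  rewrite !Normc.normcM !normc_invfact normcX !exp_coeffE /=.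
  rewrite ler_pM ?mulr_ge0 ?invr_ge0 ?exprn_ge0 ?normc_ge0 //.
  by rewrite ler_wpM2l ?invr_ge0 ?normc_mx_exp_le.
rewrite -[X in _ --> X]subr0 (_ : (fun N => _) = fun N =>
    expc_trunc c N * expm_trunc A N i j -
    (square_sum (term i j) N - cauchy_sum (term i j) N)).
  exact: cvgB cvg_prod cvg_rem.
by apply: funext => N; rewrite expc_trunc_mul_expm_truncE subKr expm_trunc_scalar_addE.
Qed.

End ScalarShift.

End Exponentials.

Section JoinLaplacian.
Variable R : realType.
Local Notation C := (R[i] : numFieldType).
Variables (n m : nat) (G : rel 'I_n) (H : rel 'I_m).
Hypothesis symG : symmetric G.
Local Notation J := (graph_join G H).

Lemma graph_join_ll x y : J (lshift m x) (lshift m y) = G x y.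
Proof. by rewrite /graph_join !(unsplitK (inl _ _)). Qed.

Lemma graph_join_rl z y : J (rshift n z) (lshift m y) = true.
Proof. by rewrite /graph_join (unsplitK (inl _ _)) (unsplitK (inr _ _)). Qed.

Lemma graph_join_lr x z : J (lshift m x) (rshift n z) = true.
Proof. by rewrite /graph_join (unsplitK (inl _ _)) (unsplitK (inr _ _)). Qed.

Lemma card_graph_join_lshift x :
  #|[pred z | J (lshift m x) z]| = (#|[pred z | G x z]| + m)%N.
Proof.
rewrite -!sum1_card (big_split_ord _ _ (fun _ => 1%N)) /=.
rewrite (eq_bigl (G x)) => [|y]; last by rewrite inE graph_join_ll.
rewrite [X in (_ + X)%N](eq_bigl xpredT) => [|z]; last by rewrite inE graph_join_lr.
by rewrite sum1_card big_const_ord iter_addn_0 mul1n.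
Qed.

Lemma mul_const_mx1_laplacian k : (const_mx 1 : 'M[C]_(k, n)) *m laplacian R G = 0.
Proof.
apply/matrixP => i y; rewrite !mxE.
under eq_bigr do rewrite !mxE mul1r.
rewrite sumrB (bigD1 y) //= eqxx mul1r big1 => [|x /negbTE ->]; last by rewrite mul0r.
rewrite addr0 -sum1_card natr_sum big_mkcond /= -sumrB big1 // => x _.
by rewrite inE symG; case: (G x y); rewrite /= ?mulr1n ?mulr0n subrr.
Qed.

Lemma lsubmx_laplacian_join :
  lsubmx (laplacian R J) = col_mx (laplacian R G + (m%:R)%:M) (- const_mx 1).
Proof.
apply/matrixP => i y; rewrite mxE -(splitK i); case: (fintype.split i) => [x|z] /=.
  rewrite col_mxEu !mxE eq_lshift card_graph_join_lshift graph_join_ll natrD.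
  by case: (x == y); rewrite ?mul1r ?mul0r ?mulr1n ?mulr0n; ring.
by rewrite col_mxEd !mxE eq_rlshift graph_join_rl mul0r sub0r.
Qed.

Lemma laplacian_join_mul_col_mx (v : 'cV[C]_n) :
  (const_mx 1 : 'M[C]_(m, n)) *m v = 0 ->
  laplacian R J *m col_mx v 0 = col_mx ((laplacian R G + (m%:R)%:M) *m v) 0.
Proof.
move=> v0; rewrite -[laplacian R J]hsubmxK mul_row_col mulmx0 addr0.
by rewrite lsubmx_laplacian_join mul_col_mx mulNmx v0 oppr0.
Qed.

Lemma transition_join_mul_col_mx (t : R) (v : 'cV[C]_n) :
  (const_mx 1 : 'M[C]_(m, n)) *m v = 0 ->
  transition J t *m col_mx v 0 =
  expc ((t * m%:R)%:C * 'i) *: col_mx (transition G t *m v) 0.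
Proof.
pose s : C := t%:C * 'i; pose E : 'M[C]_(n + m, n) := col_mx 1%:M 0.
have mulE (w : 'cV[C]_n) : E *m w = col_mx w 0 by rewrite mul_col_mx mul1mx mul0mx.
move=> v0; rewrite /transition -!mulE.
rewrite (expm_mulmx_intertwined (B := s *: (laplacian R G + (m%:R)%:M))
  (S := fun w => (const_mx 1 : 'M[C]_(m, n)) *m w = 0)) => // [|w w0|w w0].
- rewrite scalerDr addrC scale_scalar_mx expm_scalar_add -scalemxAl -scalemxAr.
  by rewrite rmorphM /= rmorph_nat mulrAC.
- rewrite -scalemxAl mulmxDl mul_scalar_mx -scalemxAr mulmxDr mulmxA.
  by rewrite mul_const_mx1_laplacian mul0mx add0r -scalemxAr w0 !scaler0.
- by rewrite -!scalemxAl -scalemxAr !mulE laplacian_join_mul_col_mx.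
Qed.

End JoinLaplacian.

Lemma evec_lshift (R : realType) n m (a : 'I_n) :
  evec R (lshift m a) = col_mx (evec R a) 0.
Proof.
apply/matrixP => i j; rewrite -(splitK i); case: (fintype.split i) => k /=.
  by rewrite col_mxEu !mxE eq_lshift.
by rewrite col_mxEd !mxE eq_rlshift.
Qed.

Lemma mul_const_mx1_evecB (R : realType) n k (a b : 'I_n) :
  (const_mx 1 : 'M[R[i]]_(k, n)) *m (evec R a - evec R b) = 0.
Proof.
have ones_evec c : (const_mx 1 : 'M[R[i]]_(k, n)) *m evec R c = const_mx 1.
  apply/matrixP => i j; rewrite !mxE (bigD1 c) //= big1 => [|x /negbTE xc].
    by rewrite !mxE !eqxx (ord1 j) mulr1 addr0.
  by rewrite !mxE xc mulr0.
by rewrite mulmxBr !ones_evec subrr.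
Qed.

Theorem mainTheorem2 (R : realType) (n m : nat) (G : rel 'I_n) (H : rel 'I_m)
    (hG : simple_graph G) (hH : simple_graph H) (a b c d : 'I_n) :
  pair_pst R G a b c d <->
  pair_pst R (graph_join G H) (lshift m a) (lshift m b) (lshift m c) (lshift m d).
Proof.
(* Only the symmetry of G enters, through the zero column sums of its Laplacian. *)
have [symG _] := hG.
have transE t := transition_join_mul_col_mx H symG t (mul_const_mx1_evecB R m a b).
pose phase (t : R) := expc ((t * m%:R)%:C * 'i).
have phase1 (t : R) : `|phase t| = 1 by exact: normr_expc_Euler.
rewrite /pair_pst !evec_lshift !opp_col_mx !add_col_mx oppr0 addr0.
split=> -[t [t0 [g [g1 Tg]]]]; exists t; split=> //.
  exists (phase t * g); rewrite normrM phase1 g1 mulr1; split=> //.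
  by rewrite transE Tg !scale_col_mx !scaler0 scalerA.
exists ((phase t)^-1 * g); rewrite normrM normfV phase1 g1 invr1 mulr1; split=> //.
move: Tg; rewrite transE -/(phase t) !scale_col_mx !scaler0 => /eq_col_mx[Tg _].
have phase_neq0 : phase t != 0 by rewrite -normr_eq0 phase1 oner_eq0.
by rewrite -scalerA -Tg scalerA mulVf // scale1r.
Qed.
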